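(* Let $f:\mathbb{R}^d\to\mathbb{R}$ be convex and differentiable with $L$-Lipschitz gradient ($\|\nabla f(x)-\nabla f(y)\|\le L\|x-y\|$ for all $x,y$), and suppose $X^*\neq\emptyset$. Run the Proximal Bundle Method with parameter $\beta\in(0,1)$ and constant stepsize $\rho_k=\rho>0$. Let $D^2=\sup_k\mathrm{dist}(x_k,X^* )^2$ and assume $0<D^2<\infty$. Then for any $0<\epsilon\le f(x_0)-f^*$, the number of descent steps taken before an $\epsilon$-minimizer is found is at most $$N:=\frac{2\rho D^2}{\beta\epsilon}+\left\lceil\frac{2\log\left(\frac{f(x_0)-f^*}{\rho D^2}\right)}{\beta}\right\rceil_+,$$ and the number of null steps taken before then is at most $$\frac{16(L+\rho)^3}{(1-\beta)^2\rho^3}\left(N+1\right).$$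
   Context: Throughout, $f:\mathbb{R}^d\to\mathbb{R}$ is a proper closed convex function attaining its minimum $f^*=\inf f$ on the nonempty set $X^*=\{x: f(x)=f^*\}$; $\mathrm{dist}(x,S)=\inf_{y\in S}\|x-y\|$; $\partial f(x)$ is the convex subdifferential; $\lceil a\rceil_+=\max\{\lceil a\rceil,0\}$. A subgradient oracle returns, for any $x$, the value $f(x)$ and some $g(x)\in\partial f(x)$. Proximal Bundle Method: fix $\beta\in(0,1)$, $x_0=z_0\in\mathbb{R}^d$, $g_0=g(x_0)$, and the initial model $f_0(x)=f(x_0)+\langle g_0,x-x_0\rangle$. At iteration $k\ge0$, given a convex model $f_k:\mathbb{R}^d\to\mathbb{R}$ and stepsize $\rho_k>0$, compute $z_{k+1}=\operatorname{argmin}_z f_k(z)+\frac{\rho_k}{2}\|z-x_k\|^2$. If $\beta(f(x_k)-f_k(z_{k+1}))\le f(x_k)-f(z_{k+1})$, iteration $k$ is a descent step and $x_{k+1}=z_{k+1}$; otherwise it is a null step and $x_{k+1}=x_k$. Then a new convex model $f_{k+1}$ and stepsize $\rho_{k+1}$ are chosen satisfying, with $g_{k+1}=g(z_{k+1})$ and $s_{k+1}=\rho_k(x_k-z_{k+1})$: (1) $f_{k+1}(x)\le f(x)$ for all $x$; (2) $f_{k+1}(x)\ge f(z_{k+1})+\langle g_{k+1},x-z_{k+1}\rangle$ for all $x$; (3) if iteration $k$ was a null step, $f_{k+1}(x)\ge f_k(z_{k+1})+\langle s_{k+1},x-z_{k+1}\rangle$ for all $x$; (4) if iteration $k$ was a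 null step, $\rho_{k+1}\ge\rho_k$. An $\epsilon$-minimizer is a point $x$ with $f(x)-f^*\le\epsilon$. *)

From HB Require Import structures.
From mathcomp Require Import all_boot all_order all_algebra.
From mathcomp Require Import all_classical all_reals.
From mathcomp Require Import exp.
Set Implicit Arguments. Unset Strict Implicit. Unset Printing Implicit Defensive.
Import Order.TTheory GRing.Theory Num.Theory.
Local Open Scope classical_set_scope.
Local Open Scope ring_scope.

Section PBM.
Variables (R : realType) (d : nat).
Notation V := 'rV[R]_d.

Definition dot (u v : V) : R := \sum_(i < d) u ord0 i * v ord0 i.
Definition enorm (u : V) : R := Num.sqrt (dot u u).

Definition convex_fun (f : V -> R) : Prop :=
  forall (x y : V) (t : R), 0 <= t <= 1 ->
    f (t *: x + (1 - t) *: y) <= t * f x + (1 - t) * f y.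

Definition is_subgrad (f : V -> R) (x g : V) : Prop :=
  forall y, f x + dot g (y - x) <= f y.

Definition is_gradient (f : V -> R) (grad : V -> V) : Prop :=
  forall x (eps : R), 0 < eps -> exists2 delta : R, 0 < delta &
    forall h : V, enorm h < delta ->
      `| f (x + h) - f x - dot (grad x) h | <= eps * enorm h.

Definition fstar (f : V -> R) : R := inf (range f).
Definition Xstar (f : V -> R) : set V := [set x | f x = fstar f].
Definition attains_min (f : V -> R) : Prop := exists xs, forall y, f xs <= f y.
Definition dist (x : V) (S : set V) : R := inf [set enorm (x - y) | y in S].

Definition is_descent (f : V -> R) (beta : R) (x z : nat -> V)
  (model : nat -> V -> R) (k : nat) : bool :=
  beta * (f (x k) - model k (z k.+1)) <= f (x k) - f (z k.+1).

(* The Proximal Bundle Method with constant stepsize rho_k = rho,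
   subgradient oracle g, iterates x_k, proximal points z_k, models f_k *)
Definition PBM_run (f : V -> R) (g : V -> V) (beta rho : R)
  (x z : nat -> V) (model : nat -> V -> R) : Prop :=
  x 0%N = z 0%N /\
  [/\ (forall y, model 0%N y = f (x 0%N) + dot (g (x 0%N)) (y - x 0%N)),
      (forall k, convex_fun (model k)),
      (forall k y, model k (z k.+1) + rho / 2 * enorm (z k.+1 - x k) ^+ 2
                   <= model k y + rho / 2 * enorm (y - x k) ^+ 2),
      (forall k, x k.+1 = if is_descent f beta x z model k then z k.+1 else x k) &
      (forall k,
        [/\ (forall y, model k.+1 y <= f y),
            (forall y, f (z k.+1) + dot (g (z k.+1)) (y - z k.+1) <= model k.+1 y) &
            (~~ is_descent f beta x z model k ->
              forall y, model k (z k.+1) + dot (rho *: (x k - z k.+1)) (y - z k.+1)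
                        <= model k.+1 y)])].
(* condition (4) rho_{k+1} >= rho_k holds trivially for a constant stepsize *)

Definition ceil_pos (a : R) : R := (Num.max (Num.ceil a) 0%Z)%:~R.

End PBM.

From Pilot Require Import Defs.
From HB Require Import structures.
From mathcomp Require Import all_boot all_order all_algebra.
From mathcomp Require Import all_classical all_reals.
From mathcomp Require Import exp sequences.
From mathcomp Require Import ring lra zify.
Set Implicit Arguments. Unset Strict Implicit. Unset Printing Implicit Defensive.
Import Order.TTheory GRing.Theory Num.Theory.
Local Open Scope classical_set_scope.
Local Open Scope ring_scope.

(* Write h_k = f(x_k) - f^* for the optimality gap and a = rho D^2.

   The proximal subproblem, compared with the point
   x_k + t (x^* - x_k) on the segment towards a near-minimizer, shows that
   f(x_k) - f_k(z_{k+1}) >= t h_k - a t^2 / 2 for every t in [0,1]; a descent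
   step therefore lowers h by beta times this amount.  While h_k >= a (t = 1)
   h contracts by the factor 1 - beta/2, which can happen at most about
   2 log(h_0/a)/beta times; once h_k < a (t = h_k/a) the quantity 1/h grows
   by beta/(2a) per step, so at most 2a/(beta eps) such steps keep h > eps.

   During a run of consecutive null steps from a serious point
   x_s, the optimal value of the proximal subproblem increases at each step
   by rho/2 |z_{k+2} - z_{k+1}|^2 (cut property (3)), while smoothness and
   the failed descent test bound this gap from below.  Since the gap starts
   below |g(x_s)|^2/(2 rho) and stays above |g(x_s)|^2/(2(2L+rho)), a run has
   at most 16 (L+rho)^3/((1-beta)^2 rho^3) steps. *)

Lemma ceil_pos_ge (R : realType) (y : R) : y <= ceil_pos y.
Proof.
by apply: (le_trans (Num.Theory.ceil_ge y)); rewrite ler_int le_max lexx.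
Qed.

Lemma ceil_pos_ge0 (R : realType) (y : R) : 0 <= ceil_pos y.
Proof. by rewrite ler0z le_max lexx orbT. Qed.

Lemma ceil_pos_gt (R : realType) (y : R) (n : nat) :
  n%:R < y -> n.+1%:R <= ceil_pos y.
Proof.
move=> n_lt_y.
have n_lt : (n%:Z < Num.ceil y)%R.
  by rewrite -(ltr_int R); apply: lt_le_trans n_lt_y (Num.Theory.ceil_ge y).
have : (n%:Z + 1 <= Num.max (Num.ceil y) 0)%R.
  by rewrite lezD1 (lt_le_trans n_lt) // le_max lexx.
by rewrite -(ler_int R) intrD -natr1.
Qed.

Lemma contraction_count_lt (R : realType) (beta a h0 : R) (n : nat) :
  0 < beta -> beta <= 2 -> 0 < a -> 0 < h0 -> (0 < n)%N ->
  a <= (1 - beta / 2) ^+ n * h0 -> n%:R < 2 * ln (h0 / a) / beta.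
Proof.
move=> beta_gt0 beta_le2 a_gt0 h0_gt0 n_gt0 a_le.
have q_ge0 : 0 <= 1 - beta / 2 by lra.
have q_lt : 1 - beta / 2 < expR (- (beta / 2)).
  have := @expR_gt1Dx R (- (beta / 2)); rewrite -/(1 - beta / 2); apply.
  by rewrite oppr_eq0 gt_eqF // divr_gt0.
have qn_lt : (1 - beta / 2) ^+ n < expR (n%:R * - (beta / 2)).
  by rewrite expRM_natl ltrXn2r // -lt0n.
have a_lt : a < expR (n%:R * - (beta / 2)) * h0.
  by apply: (le_lt_trans a_le); rewrite ltr_pM2r.
move: a_lt; rewrite -ltr_ln ?posrE ?mulr_gt0 ?expR_gt0 //.
rewrite lnM ?posrE ?expR_gt0 // expRK => ln_lt.
by rewrite ltr_pdivlMr // ln_div ?posrE //; lra.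
Qed.

Lemma contraction_count_le (R : realType) (beta a h0 : R) (n : nat) :
  0 < beta -> beta <= 2 -> 0 < a -> 0 < h0 ->
  a <= (1 - beta / 2) ^+ n * h0 -> n%:R <= 2 * ln (h0 / a) / beta.
Proof.
case: n => [|n] beta_gt0 beta_le2 a_gt0 h0_gt0 a_le; last first.
  by apply/ltW/contraction_count_lt.
rewrite divr_ge0 ?mulr_ge0 ?ln_ge0 ?(ltW beta_gt0) //.
by rewrite ler_pdivlMr // mul1r -[h0]mul1r -(expr0 (1 - beta / 2)).
Qed.

(* One step of h' <= h - b h^2/(2a) raises the lower bound c/(2a) on 1/h
   by b/(2a). *)
Lemma reciprocal_step (R : realType) (a b c h h' : R) :
  0 < a -> 0 < b <= 1 -> 2 <= c -> 0 <= h -> h * c <= 2 * a ->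
  2 * a * h' <= 2 * a * h - b * h ^+ 2 -> h' * (c + b) <= 2 * a.
Proof.
move=> a_gt0 /andP[b_gt0 b_le1] c_ge2 h_ge0 hc_le step.
have bh_le : b * h <= 2 * a by nra.
have key : 0 <= (2 * a - h * c) * (2 * a - b * h).
  by apply: mulr_ge0; rewrite subr_ge0.
rewrite -(ler_pM2l (_ : 0 < 2 * a)) ?mulr_gt0 // mulrA.
apply: le_trans (ler_wpM2r _ step) _; first by lra.
have -> : (2 * a * h - b * h ^+ 2) * (c + b) =
  2 * a * (2 * a) - (2 * a - h * c) * (2 * a - b * h) - (b * h) ^+ 2 by ring.
by rewrite -addrA -opprD lerBlDr lerDl addr_ge0 ?sqr_ge0.
Qed.

Definition null_run_const (R : realType) (L rho beta : R) : R :=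
  16 * (L + rho) ^+ 3 / ((1 - beta) ^+ 2 * rho ^+ 3).

Lemma null_run_const_ge0 (R : realType) (L rho beta : R) :
  0 <= L -> 0 < rho -> 0 <= null_run_const L rho beta.
Proof.
move=> L_ge0 rho_gt0; rewrite /null_run_const; apply: divr_ge0.
  by rewrite mulr_ge0 // exprn_ge0 // addr_ge0 // ltW.
by rewrite mulr_ge0 ?sqr_ge0 // exprn_ge0 // ltW.
Qed.

Lemma null_run_arith (R : realType) (L rho beta G n : R) :
  0 <= L -> 0 < rho -> 0 <= beta < 1 -> 0 < G -> 0 <= n ->
  n * (rho * (1 - beta) * (G / (2 * (2 * L + rho)))) <= L * G / rho ->
  n + 1 <= null_run_const L rho beta.
Proof.
rewrite /null_run_const; move=> L_ge0 rho_gt0 /andP[beta_ge0 beta_lt1] G_gt0 n_ge0 incr.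
have rho0 : rho != 0 by rewrite gt_eqF.
have c0 : 2 * L + rho != 0 by rewrite gt_eqF //; lra.
have two0 : (2 : R) != 0 by rewrite gt_eqF.
have n_le : n * (rho ^+ 2 * (1 - beta)) <= 2 * L * (2 * L + rho).
  have scale : 0 < G / (rho * (2 * (2 * L + rho))).
    by rewrite divr_gt0 // !mulr_gt0 //; lra.
  have e1 : n * (rho ^+ 2 * (1 - beta)) * (G / (rho * (2 * (2 * L + rho)))) =
            n * (rho * (1 - beta) * (G / (2 * (2 * L + rho)))).
    by field; rewrite ?rho0 ?c0 ?two0.
  have e2 : 2 * L * (2 * L + rho) * (G / (rho * (2 * (2 * L + rho)))) = L * G / rho.
    by field; rewrite ?rho0 ?c0 ?two0.
  by rewrite -(ler_pM2r scale) e1 e2.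
rewrite ler_pdivlMr ?mulr_gt0 ?exprn_gt0 ?subr_gt0 //.
have e : (n + 1) * ((1 - beta) ^+ 2 * rho ^+ 3) =
  ((1 - beta) * rho) * (n * (rho ^+ 2 * (1 - beta))) + (1 - beta) ^+ 2 * rho ^+ 3.
  by ring.
rewrite e; apply: le_trans (_ : _ <= rho * (2 * L * (2 * L + rho)) + rho ^+ 3) _.
  apply: lerD.
    apply: (le_trans (ler_wpM2l _ n_le)); first by apply: mulr_ge0; lra.
    by rewrite ler_wpM2r ?ler_piMl //; nra.
  by rewrite ler_piMl ?exprn_ge0 ?(ltW rho_gt0) // expr_le1 //; lra.
rewrite -subr_ge0.
have -> : 16 * (L + rho) ^+ 3 - (rho * (2 * L * (2 * L + rho)) + rho ^+ 3) =
  16 * L ^+ 3 + 44 * (L ^+ 2 * rho) + 46 * (L * rho ^+ 2) + 15 * rho ^+ 3 by ring.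
by rewrite !addr_ge0 ?mulr_ge0 ?exprn_ge0 // ltW.
Qed.

Section Euclidean.
Variables (R : realType) (d : nat).
Local Notation V := 'rV[R]_d.
Local Notation dot := (@dot R d).
Local Notation enorm := (@enorm R d).

Lemma dotC (u v : V) : dot u v = dot v u.
Proof. by rewrite /Defs.dot; apply: eq_bigr => i _; rewrite mulrC. Qed.

Lemma dotDl (u v w : V) : dot (u + v) w = dot u w + dot v w.
Proof. by rewrite /Defs.dot -big_split; apply: eq_bigr => i _; rewrite !mxE mulrDl. Qed.

Lemma dotZl (a : R) (u w : V) : dot (a *: u) w = a * dot u w.
Proof. by rewrite /Defs.dot mulr_sumr; apply: eq_bigr => i _; rewrite !mxE mulrA. Qed.

Lemma dotNl (u w : V) : dot (- u) w = - dot u w.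
Proof. by rewrite -scaleN1r dotZl mulN1r. Qed.

Lemma dotBl (u v w : V) : dot (u - v) w = dot u w - dot v w.
Proof. by rewrite dotDl dotNl. Qed.

Lemma dotDr (u v w : V) : dot w (u + v) = dot w u + dot w v.
Proof. by rewrite dotC dotDl !(dotC w). Qed.

Lemma dotZr (a : R) (u w : V) : dot w (a *: u) = a * dot w u.
Proof. by rewrite dotC dotZl dotC. Qed.

Lemma dotNr (u w : V) : dot w (- u) = - dot w u.
Proof. by rewrite dotC dotNl dotC. Qed.

Lemma dotBr (u v w : V) : dot w (u - v) = dot w u - dot w v.
Proof. by rewrite dotDr dotNr. Qed.

Lemma dot0l (u : V) : dot 0 u = 0.
Proof. by rewrite -(scale0r (0 : V)) dotZl mul0r. Qed.

Lemma dotNN (u : V) : dot (- u) (- u) = dot u u.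
Proof. by rewrite dotNl dotNr opprK. Qed.

Lemma dot_sqrD (u v : V) : dot (u + v) (u + v) = dot u u + 2 * dot u v + dot v v.
Proof. by rewrite !dotDl !dotDr (dotC v u); ring. Qed.

Lemma dot_ge0 (u : V) : 0 <= dot u u.
Proof. by rewrite /Defs.dot; apply: sumr_ge0 => i _; rewrite -expr2 sqr_ge0. Qed.

Lemma dot_eq0 (u : V) : dot u u = 0 -> u = 0.
Proof.
move=> u0; apply/rowP => i; rewrite mxE.
have sq0 : \sum_(j < d | true) u ord0 j ^+ 2 = 0.
  by rewrite -[RHS]u0 /Defs.dot; apply: eq_bigr => j _; rewrite expr2.
have /eqP := @psumr_eq0P _ _ xpredT _ (fun j _ => sqr_ge0 (u ord0 j)) sq0 i isT.
by rewrite sqrf_eq0 => /eqP ->; case: i.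
Qed.

Lemma enorm_sq (u : V) : enorm u ^+ 2 = dot u u.
Proof. by rewrite /Defs.enorm sqr_sqrtr // dot_ge0. Qed.

Lemma enorm_ge0 (u : V) : 0 <= enorm u.
Proof. exact: sqrtr_ge0. Qed.

Lemma enormZ (t : R) (u : V) : 0 <= t -> enorm (t *: u) = t * enorm u.
Proof.
move=> t_ge0; rewrite /Defs.enorm dotZl dotZr mulrA -expr2 sqrtrM ?sqr_ge0 //.
by rewrite sqrtr_sqr ger0_norm.
Qed.

Lemma cauchy_schwarz (u v : V) : dot u v ^+ 2 <= dot u u * dot v v.
Proof.
have [uu0|uu_neq0] := eqVneq (dot u u) 0.
  by rewrite (dot_eq0 uu0) dot0l expr0n /= dot0l mul0r.
have uu_gt0 : 0 < dot u u by rewrite lt0r uu_neq0 dot_ge0.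
set t := dot u v / dot u u.
have := dot_ge0 (t *: u - v).
rewrite !(dotBl, dotBr, dotZl, dotZr) (dotC v u) /t => proj_ge0.
rewrite -subr_ge0.
have -> : dot u u * dot v v - dot u v ^+ 2 = dot u u *
    (dot u v / dot u u * (dot u v / dot u u * dot u u - dot u v) -
     (dot u v / dot u u * dot u v - dot v v)).
  by field; rewrite uu_neq0.
by rewrite mulr_ge0 // ltW.
Qed.

Lemma dot_le_scaled (a b : V) (L : R) : 0 <= L -> enorm a <= L * enorm b ->
  dot a b <= L * dot b b.
Proof.
move=> L_ge0 ab_le.
have aa_le : dot a a <= L ^+ 2 * dot b b.
  rewrite -!enorm_sq -exprMn; apply: lerXn2r => //; rewrite nnegrE ?enorm_ge0 //.
  by rewrite mulr_ge0 // enorm_ge0.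
have sq_le : dot a b ^+ 2 <= (L * dot b b) ^+ 2.
  apply: (le_trans (cauchy_schwarz a b)); rewrite exprMn expr2 mulrA.
  by apply: ler_wpM2r => //; exact: dot_ge0.
have [ab_le0|ab_gt0] := lerP (dot a b) 0.
  by apply: (le_trans ab_le0); rewrite mulr_ge0 // dot_ge0.
by rewrite -(ler_pXn2r (n:=2)) // ?nnegrE ?mulr_ge0 ?dot_ge0 // ltW.
Qed.

End Euclidean.

Section Smoothness.
Variables (R : realType) (d : nat) (f : 'rV[R]_d -> R) (grad : 'rV[R]_d -> 'rV[R]_d).
Hypothesis f_grad : is_gradient f grad.
Local Notation dot := (@dot R d).
Local Notation enorm := (@enorm R d).

(* At a point of differentiability the only subgradient is the gradient:
   moving along v = s - grad u, the subgradient inequality gains t |v|^2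
   while differentiability allows only o(t). *)
Lemma subgrad_gradient u s : is_subgrad f u s -> s = grad u.
Proof.
move=> s_sub; apply/eqP; rewrite -subr_eq0; apply/eqP; set v := s - grad u.
apply: dot_eq0; apply/eqP; apply/negPn/negP => vv_neq0.
have v_gt0 : 0 < enorm v by rewrite /Defs.enorm sqrtr_gt0 lt0r vv_neq0 dot_ge0.
have half_gt0 : 0 < enorm v / 2 by rewrite divr_gt0.
have [delta delta_gt0 taylor] := f_grad u half_gt0.
set t := delta / (2 * enorm v).
have t_gt0 : 0 < t by rewrite /t divr_gt0 // mulr_gt0.
have tv_norm : enorm (t *: v) = t * enorm v by rewrite enormZ // ltW.
have tv_eq : t * enorm v = delta / 2 by rewrite /t; field; rewrite gt_eqF.
have := taylor (t *: v); rewrite tv_norm tv_eq => /(_ (ltac:(lra))) /(le_trans (ler_norm _)).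
have := s_sub (u + t *: v); rewrite (addrC u) addrK.
have -> : dot s (t *: v) = dot (grad u) (t *: v) + t * enorm v ^+ 2.
  by rewrite enorm_sq -dotZr -dotDl /v addrCA subrr addr0.
rewrite -tv_eq expr2 => lower upper.
have := mulr_gt0 (mulr_gt0 t_gt0 v_gt0) v_gt0.
nra.
Qed.

Variables (L : R) (g : 'rV[R]_d -> 'rV[R]_d).
Hypothesis L_ge0 : 0 <= L.
Hypothesis grad_lip : forall u v, enorm (grad u - grad v) <= L * enorm (u - v).
Hypothesis g_sub : forall u, is_subgrad f u (g u).

(* Quadratic upper bound of an L-smooth convex function (in the weak form
   with constant L instead of L/2), stated with the oracle subgradients. *)
Lemma smooth_upper_bound p q :
  f q <= f p + dot (g p) (q - p) + L * dot (q - p) (q - p).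
Proof.
have sub_q := g_sub q p.
have lip : dot (g q - g p) (q - p) <= L * dot (q - p) (q - p).
  by apply: dot_le_scaled; rewrite // !(subgrad_gradient (g_sub _)).
have split_dot : dot (g q) (p - q) = - dot (g p) (q - p) - dot (g q - g p) (q - p).
  by rewrite dotBl -(opprB q p) dotNr; ring.
rewrite split_dot in sub_q; lra.
Qed.

End Smoothness.

Section Minimizers.
Variables (R : realType) (d : nat) (f : 'rV[R]_d -> R).
Hypothesis f_min : attains_min f.
Local Notation dot := (@dot R d).

Lemma fstar_attained : exists xs, f xs = fstar f.
Proof.
case: f_min => xs xs_min; exists xs; apply/eqP; rewrite eq_le; apply/andP; split.
  by apply: lb_le_inf; [exists (f xs); exists xs | move=> _ [y _ <-]].
by apply: ge_inf; [exists (f xs) => _ [y _ <-] | exists xs].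
Qed.

Lemma fstar_le y : fstar f <= f y.
Proof.
have [xs xs_eq] := fstar_attained; case: f_min => xm xm_min.
by apply: ge_inf; [exists (f xm) => _ [u _ <-] | exists y].
Qed.

Lemma near_minimizer p eta : 0 < eta ->
  exists xs, f xs = fstar f /\ dot (xs - p) (xs - p) <= dist p (Xstar f) ^+ 2 + eta.
Proof.
move=> eta_gt0.
set S := [set enorm (p - y) | y in Xstar f].
have [xs xs_eq] := fstar_attained.
have S_ne : S !=set0 by exists (enorm (p - xs)); exists xs.
set dd := dist p (Xstar f).
have dd_ge0 : 0 <= dd by apply: lb_le_inf => // _ [y _ <-]; exact: enorm_ge0.
set e := eta / (2 * dd + 1 + eta).
have e_gt0 : 0 < e by rewrite /e divr_gt0 //; lra.
have e_le1 : e <= 1 by rewrite /e ler_pdivrMr; lra.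
have e_small : e * (2 * dd + 1) <= eta.
  by rewrite /e mulrAC ler_pdivrMr; [nra | lra].
have [_ [y y_min <-] y_lt] : exists2 v, S v & v < dd + e.
  by apply: inf_lt => //; rewrite /dd /Defs.dist; lra.
exists y; split; first exact: y_min.
rewrite -(opprB p y) dotNN -enorm_sq.
have : enorm (p - y) ^+ 2 <= (dd + e) ^+ 2.
  by apply: lerXn2r; rewrite ?nnegrE ?enorm_ge0 //; [lra | exact: ltW].
nra.
Qed.

End Minimizers.

Lemma count_iotaS (P : pred nat) (k : nat) :
  count P (iota 0 k.+1) = (count P (iota 0 k) + P k)%N.
Proof. by rewrite -addn1 iotaD count_cat /= add0n addn0. Qed.

Section DescentSteps.
Variables (R : realType) (h : nat -> R) (desc : pred nat) (beta a : R).
Hypothesis beta_gt0 : 0 < beta.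
Hypothesis beta_le1 : beta <= 1.
Hypothesis a_gt0 : 0 < a.
Hypothesis h_ge0 : forall k, 0 <= h k.
Hypothesis h_null : forall k, ~~ desc k -> h k.+1 = h k.
Hypothesis h_desc : forall k t, desc k -> 0 <= t <= 1 ->
  h k.+1 <= h k - beta * (t * h k - a / 2 * t ^+ 2).

Local Notation q := (1 - beta / 2).

Lemma q_ge0 : 0 <= q.
Proof. by have := beta_le1; lra. Qed.

Lemma h_noninc k : h k.+1 <= h k.
Proof.
case desc_k: (desc k); last by rewrite h_null ?desc_k.
have := @h_desc k 0 desc_k; rewrite lexx ler01 expr0n /= => /(_ isT); lra.
Qed.

Lemma h_noninc_le i j : (i <= j)%N -> h j <= h i.
Proof.
elim: j => [|j IH]; first by rewrite leqn0 => /eqP ->.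
rewrite leq_eqVlt => /orP [/eqP ->|i_le_j] //.
exact: le_trans (h_noninc j) (IH i_le_j).
Qed.

(* Large gaps (h >= a, take t = 1) contract geometrically. *)
Lemma large_step k : desc k -> a <= h k -> h k.+1 <= q * h k.
Proof.
move=> desc_k large; have := @h_desc k 1 desc_k; rewrite ler01 lexx expr1n.
have := ler_wpM2l (ltW beta_gt0) large.
by move=> ? /(_ isT); lra.
Qed.

(* Small gaps (h < a, take t = h/a) satisfy h' <= h - beta h^2/(2a). *)
Lemma small_step k : desc k -> h k < a ->
  2 * a * h k.+1 <= 2 * a * h k - beta * h k ^+ 2.
Proof.
move=> desc_k small.
have t_in : 0 <= h k / a <= 1.
  by rewrite divr_ge0 ?h_ge0 ?(ltW a_gt0) //= ler_pdivrMr // mul1r ltW.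
have := h_desc desc_k t_in.
have -> : h k / a * h k - a / 2 * (h k / a) ^+ 2 = h k ^+ 2 / (2 * a).
  by field; rewrite gt_eqF.
move=> /(ler_wpM2l (ltW (mulr_gt0 (ltr0n _ 2) a_gt0))).
have -> // : 2 * a * (h k - beta * (h k ^+ 2 / (2 * a))) =
             2 * a * h k - beta * h k ^+ 2.
by field; rewrite gt_eqF.
Qed.

Definition large_steps k := count (fun j => desc j && (a <= h j)) (iota 0 k).
Definition small_steps k := count (fun j => desc j && (h j < a)) (iota 0 k).

Lemma descents_split k : count desc (iota 0 k) = (large_steps k + small_steps k)%N.
Proof.
rewrite /large_steps /small_steps; elim: k => // k IH.
by rewrite !count_iotaS IH; case: (desc k); case: leP => /=; lia.
Qed.

Lemma large_contraction k : h k <= q ^+ large_steps k * h 0%N.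
Proof.
rewrite /large_steps; elim: k => [|k IH]; first by rewrite /= expr0 mul1r.
rewrite count_iotaS; case: (boolP (desc k && (a <= h k))) => [/andP[dk ak]|_] /=.
  rewrite addn1 exprS -mulrA; apply: le_trans (large_step dk ak) _.
  by apply: ler_wpM2l => //; exact: q_ge0.
by rewrite addn0; exact: le_trans (h_noninc k) IH.
Qed.

Lemma large_last k : (0 < large_steps k)%N -> a <= q ^+ (large_steps k).-1 * h 0%N.
Proof.
elim: k => [|k IH] //; rewrite {1 2}/large_steps count_iotaS.
case: (boolP (desc k && (a <= h k))) => [/andP[_ ak] _|_] /=.
  by rewrite addn1 /=; exact: le_trans ak (large_contraction k).
by rewrite addn0; exact: IH.
Qed.

Lemma small_below k : (0 < small_steps k)%N -> h k < a.
Proof.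
elim: k => [|k IH] //; rewrite {1}/small_steps count_iotaS.
case: (boolP (desc k && (h k < a))) => [/andP[_ ak] _|_] /=.
  exact: le_lt_trans (h_noninc k) ak.
by rewrite addn0 => /IH; exact: le_lt_trans (h_noninc k).
Qed.

Lemma small_reciprocal k : h k < a -> h k * (2 + beta * (small_steps k)%:R) <= 2 * a.
Proof.
elim: k => [|k IH] hk_lt; first by rewrite /= mulr0 addr0; lra.
rewrite /small_steps count_iotaS -/(small_steps k).
have c_ge2 : 2 <= 2 + beta * (small_steps k)%:R.
  by rewrite lerDl mulr_ge0 // ltW.
case: (boolP (desc k && (h k < a))) => [/andP[dk ak]|not_small] /=.
  have -> : 2 + beta * (small_steps k + 1)%:R = 2 + beta * (small_steps k)%:R + beta.
    by rewrite natrD; ring.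
  apply: reciprocal_step (small_step dk ak) => //; first by rewrite beta_gt0.
  exact: IH.
rewrite addn0; case: (ltP (h k) a) => [ak|ak].
  apply: le_trans (IH ak); rewrite ler_wpM2r ?h_noninc //; lra.
suff -> : small_steps k = 0%N by rewrite mulr0 addr0; lra.
by apply/eqP; rewrite -leqn0 leqNgt; apply/negP => /small_below; rewrite ltNge ak.
Qed.

Local Notation L1 := (2 * ln (h 0%N / a) / beta).

Lemma large_steps_bound k : 0 < h 0%N -> (large_steps k)%:R <= ceil_pos L1 + 1.
Proof.
move=> h0_gt0; case: (posnP (large_steps k)) => [->|pos].
  by rewrite addr_ge0 ?ceil_pos_ge0.
rewrite -(prednK pos) -natr1 lerD2r; apply: le_trans (ceil_pos_ge _).
apply: contraction_count_le (large_last pos) => //.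
by apply: le_trans beta_le1 _; rewrite ler1n.
Qed.

Section Counting.
Variable eps : R.
Hypothesis eps_gt0 : 0 < eps.
Local Notation F := (2 * a / (beta * eps)).

Lemma F_ge0 : 0 <= F.
Proof. by rewrite divr_ge0 // ?mulr_ge0 // ltW // mulr_gt0. Qed.

Lemma le_F y : y * (beta * eps) <= 2 * a -> y <= F.
Proof. by move=> y_le; rewrite ler_pdivlMr // mulr_gt0. Qed.

(* Last step taken from a large gap: only large steps occurred before. *)
Lemma descents_from_large k : eps < h k -> a <= h k ->
  (count desc (iota 0 k.+1))%:R <= F + ceil_pos L1.
Proof.
move=> eps_lt large.
have h0_ge : h k <= h 0%N by apply: h_noninc_le.
have no_small : small_steps k = 0%N.
  by apply/eqP; rewrite -leqn0 leqNgt; apply/negP => /small_below; rewrite ltNge large.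
rewrite count_iotaS descents_split no_small addn0 natrD.
apply: le_trans (_ : _ <= (large_steps k)%:R + 1) _; first by rewrite lerD2l; case: (desc k).
case: (posnP (large_steps k)) => [->|pos].
  rewrite add0r; case: (ltP a (h 0%N)) => [a_lt|h0_le].
    apply: ler_wpDl F_ge0 (ceil_pos_gt (n := 0) _).
    apply: divr_gt0 => //; apply: mulr_gt0 => //.
    by apply: ln_gt0; rewrite ltr_pdivlMr // mul1r.
  apply: ler_wpDr (ceil_pos_ge0 _) _; apply: le_F; rewrite mul1r.
  have := ler_wpM2r (ltW eps_gt0) beta_le1; have := a_gt0; lra.
apply: ler_wpDl F_ge0 _; rewrite natr1; apply: ceil_pos_gt.
apply: contraction_count_lt pos (le_trans large (large_contraction k)) => //.
  by apply: le_trans beta_le1 _; rewrite ler1n.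
by apply: lt_le_trans eps_gt0 (le_trans (ltW eps_lt) _); apply: h_noninc_le.
Qed.

(* Last step taken from a small gap: the reciprocal bound caps small steps. *)
Lemma descents_from_small k : eps < h k -> h k < a -> 0 < h 0%N ->
  (count desc (iota 0 k.+1))%:R <= F + ceil_pos L1.
Proof.
move=> eps_lt small h0_gt0.
have small_cnt : (small_steps k)%:R + 2 <= F.
  apply: le_F; have := small_reciprocal small.
  have c_ge0 : 0 <= 2 + beta * (small_steps k)%:R.
    by rewrite addr_ge0 // mulr_ge0 // ltW.
  have := ler_wpM2r c_ge0 (ltW eps_lt); have := ler_wpM2r (ltW eps_gt0) beta_le1.
  lra.
have := large_steps_bound k h0_gt0.
rewrite count_iotaS descents_split !natrD.
have : (desc k)%:R <= 1 :> R by case: (desc k).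
lra.
Qed.

Lemma descent_steps_bound K : (forall k, (k < K)%N -> eps < h k) ->
  (count desc (iota 0 K))%:R <= F + ceil_pos L1.
Proof.
case: K => [|k] h_gt; first by rewrite addr_ge0 ?F_ge0 ?ceil_pos_ge0.
have eps_lt := h_gt k (ltnSn k).
case: (leP a (h k)) => [large|small]; first exact: descents_from_large.
apply: descents_from_small => //.
by apply: lt_trans eps_gt0 (h_gt 0%N _).
Qed.

End Counting.
End DescentSteps.

Definition run_start (P : pred nat) (s : nat) : bool := (s == 0%N) || P s.-1.

Section NullRuns.
Variables (R : realType) (desc : pred nat) (M : R) (K : nat).
Hypothesis run_le : forall s n, (s + n <= K)%N -> run_start desc s ->
  (forall k, (s <= k < s + n)%N -> ~~ desc k) -> n%:R <= M.

Local Notation nulls k := (count (fun j => ~~ desc j) (iota 0 k)).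
Local Notation descents k := (count desc (iota 0 k)).

Lemma nulls_prefix K' : (K' <= K)%N -> exists s, [/\ (s <= K')%N, run_start desc s,
  (forall k, (s <= k < K')%N -> ~~ desc k) &
  (nulls K')%:R <= M * (descents K')%:R + (K' - s)%:R].
Proof.
elim: K' => [|k IH] k_le.
  by exists 0%N; split => //; rewrite /= mulr0 addr0.
have [s [s_le s_start s_run nulls_le]] := IH (ltnW k_le).
rewrite !count_iotaS; case: (boolP (desc k)) => [desc_k|null_k] /=.
  exists k.+1; split.
  - exact: leqnn.
  - by rewrite /run_start /= desc_k.
  - by move=> j /andP[j_ge j_lt]; move: (leq_trans j_lt j_ge); rewrite ltnn.
  rewrite subnn addn0 addr0 natrD mulrDr mulr1; apply: (le_trans nulls_le).
  rewrite lerD2l; apply: run_le s_start _; first by rewrite subnKC // ltnW.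
  by rewrite subnKC.
exists s; split.
- exact: leqW.
- exact: s_start.
- move=> j /andP[j_ge]; rewrite ltnS leq_eqVlt => /orP[/eqP -> //|j_lt].
  by apply: s_run; rewrite j_ge.
rewrite addn0 addn1 subSn // -!natr1; lra.
Qed.

Lemma null_steps_bound : (nulls K)%:R <= M * ((descents K)%:R + 1).
Proof.
have [s [s_le s_start s_run nulls_le]] := nulls_prefix (leqnn K).
apply: (le_trans nulls_le); rewrite mulrDr mulr1 lerD2l.
by apply: run_le s_start _; rewrite subnKC.
Qed.

End NullRuns.

Section ProximalBundle.
Variables (R : realType) (d : nat) (f : 'rV[R]_d -> R) (g : 'rV[R]_d -> 'rV[R]_d)
  (beta rho : R) (x z : nat -> 'rV[R]_d) (model : nat -> 'rV[R]_d -> R).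
Hypothesis g_sub : forall u, is_subgrad f u (g u).
Hypothesis f_min : attains_min f.
Hypothesis rho_gt0 : 0 < rho.
Hypothesis run : PBM_run f g beta rho x z model.
Local Notation dot := (@dot R d).
Local Notation desc := (is_descent f beta x z model).
Local Notation h k := (f (x k) - fstar f).

Lemma model0_eq y : model 0%N y = f (x 0%N) + dot (g (x 0%N)) (y - x 0%N).
Proof. by case: run => _ [? _ _ _ _]. Qed.

Lemma prox_opt k y : model k (z k.+1) + rho / 2 * enorm (z k.+1 - x k) ^+ 2
                     <= model k y + rho / 2 * enorm (y - x k) ^+ 2.
Proof. by case: run => _ [_ _ ? _ _]. Qed.

Lemma x_next k : x k.+1 = if desc k then z k.+1 else x k.
Proof. by case: run => _ [_ _ _ ? _]. Qed.

Lemma model_lower k y : model k.+1 y <= f y.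
Proof. by case: run => _ [_ _ _ _ /(_ k) []]. Qed.

Lemma model_cut k y : f (z k.+1) + dot (g (z k.+1)) (y - z k.+1) <= model k.+1 y.
Proof. by case: run => _ [_ _ _ _ /(_ k) []]. Qed.

Lemma model_aggregate k y : ~~ desc k ->
  model k (z k.+1) + dot (rho *: (x k - z k.+1)) (y - z k.+1) <= model k.+1 y.
Proof. by move=> null_k; case: run => _ [_ _ _ _ /(_ k) [_ _ /(_ null_k)]]. Qed.

Lemma x_null k : ~~ desc k -> x k.+1 = x k.
Proof. by move=> null_k; rewrite x_next (negbTE null_k). Qed.

Lemma model_le k y : model k y <= f y.
Proof. by case: k => [|k]; [rewrite model0_eq; exact: g_sub | exact: model_lower]. Qed.

Lemma prox_le k y : model k (z k.+1) + rho / 2 * dot (z k.+1 - x k) (z k.+1 - x k)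
                    <= f y + rho / 2 * dot (y - x k) (y - x k).
Proof. by rewrite -!enorm_sq; apply: le_trans (prox_opt k y) _; rewrite lerD2r model_le. Qed.

(* Comparing z_{k+1} with the point x_k + t (x^* - x_k) gives the predicted
   decrease f(x_k) - f_k(z_{k+1}) >= t h_k - rho D t^2 / 2. *)
Lemma model_decrease k t D : convex_fun f -> dist (x k) (Xstar f) ^+ 2 <= D ->
  0 <= t <= 1 -> t * h k - rho * D / 2 * t ^+ 2 <= f (x k) - model k (z k.+1).
Proof.
move=> f_cvx dist_le t01; have /andP[t_ge0 t_le1] := t01.
apply/ler_addgt0Pr => e e_gt0.
have eta_gt0 : 0 < 2 * e / rho by rewrite divr_gt0 // mulr_gt0.
have [xs [xs_min xs_near]] := near_minimizer f_min (x k) eta_gt0.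
set y := t *: xs + (1 - t) *: x k.
have y_sub : y - x k = t *: (xs - x k) by apply/rowP => i; rewrite /y !mxE; ring.
have := f_cvx xs (x k) t t01; rewrite -/y xs_min => cvx.
have := prox_le k y; rewrite y_sub dotZl dotZr => prox.
have quad : rho / 2 * (t * (t * dot (xs - x k) (xs - x k))) <= rho * D / 2 * t ^+ 2 + e.
  have rho2_ge0 : 0 <= rho / 2 by rewrite divr_ge0 // ltW.
  have tt_le : t * (t * dot (xs - x k) (xs - x k)) <= t ^+ 2 * (D + 2 * e / rho).
    by rewrite mulrA -expr2 ler_wpM2l ?exprn_ge0 //; lra.
  have t2e_le : t ^+ 2 * e <= e by rewrite ler_piMl ?expr_le1 // ltW.
  have expand : rho / 2 * (t ^+ 2 * (D + 2 * e / rho)) = rho * D / 2 * t ^+ 2 + t ^+ 2 * e.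
    by field; rewrite gt_eqF.
  by have := ler_wpM2l rho2_ge0 tt_le; lra.
have := mulr_ge0 (divr_ge0 (ltW rho_gt0) (ler0n R 2)) (dot_ge0 (z k.+1 - x k)).
lra.
Qed.

Lemma gap_descent k t D : convex_fun f -> 0 <= beta ->
  dist (x k) (Xstar f) ^+ 2 <= D -> desc k -> 0 <= t <= 1 ->
  h k.+1 <= h k - beta * (t * h k - rho * D / 2 * t ^+ 2).
Proof.
move=> f_cvx beta_ge0 dist_le desc_k t01.
have := ler_wpM2l beta_ge0 (model_decrease f_cvx dist_le t01).
have test : beta * (f (x k) - model k (z k.+1)) <= f (x k) - f (z k.+1) := desc_k.
by rewrite x_next desc_k; lra.
Qed.

Lemma descents_bound D eps K : convex_fun f -> 0 < beta <= 1 -> 0 < D ->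
  (forall k, dist (x k) (Xstar f) ^+ 2 <= D) -> 0 < eps ->
  (forall k, (k < K)%N -> eps < h k) ->
  (count desc (iota 0 K))%:R <=
    2 * (rho * D) / (beta * eps) + ceil_pos (2 * ln (h 0%N / (rho * D)) / beta).
Proof.
move=> f_cvx /andP[beta_gt0 beta_le1] D_gt0 dist_le eps_gt0 gap_gt.
apply: (descent_steps_bound (h := fun k => h k) _ _ _ _ _ _ eps_gt0 gap_gt) => //.
- by rewrite mulr_gt0.
- by move=> k; rewrite subr_ge0 fstar_le.
- by move=> k /x_null ->.
- by move=> k t; apply: gap_descent f_cvx (ltW beta_gt0) (dist_le k).
Qed.

Section NullSteps.
Variable L : R.
Hypothesis L_ge0 : 0 <= L.
Hypothesis beta_ge0 : 0 <= beta.
Hypothesis beta_lt1 : beta < 1.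
Hypothesis smooth : forall p q, f q <= f p + dot (g p) (q - p) + L * dot (q - p) (q - p).

Definition prox_value k := model k (z k.+1) + rho / 2 * dot (z k.+1 - x k) (z k.+1 - x k).

Lemma prox_value_null k : ~~ desc k ->
  prox_value k + rho / 2 * dot (z k.+2 - z k.+1) (z k.+2 - z k.+1) <= prox_value k.+1.
Proof.
move=> null_k; rewrite /prox_value (x_null null_k).
have := model_aggregate (z k.+2) null_k.
have -> : dot (rho *: (x k - z k.+1)) (z k.+2 - z k.+1) =
          - rho * dot (z k.+2 - z k.+1) (z k.+1 - x k).
  by rewrite dotZl dotC -(opprB (z k.+1) (x k)) dotNr; ring.
have -> : z k.+2 - x k = (z k.+2 - z k.+1) + (z k.+1 - x k) by rewrite addrA subrK.
rewrite (dot_sqrD (z k.+2 - z k.+1)); lra.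
Qed.

(* A failed descent test together with smoothness: the model gap at the
   serious point is controlled by the last proximal move. *)
Lemma null_gap k : ~~ desc k.+1 ->
  (1 - beta) * (f (x k.+1) - model k.+1 (z k.+2)) <
    L * dot (z k.+2 - z k.+1) (z k.+2 - z k.+1).
Proof.
move=> null_k1.
have failed : f (x k.+1) - f (z k.+2) < beta * (f (x k.+1) - model k.+1 (z k.+2)).
  by move: null_k1; rewrite /is_descent -ltNge.
have := model_cut k (z k.+2); have := smooth (z k.+1) (z k.+2).
lra.
Qed.

Lemma start_model s y : run_start desc s ->
  f (x s) + dot (g (x s)) (y - x s) <= model s y.
Proof.
rewrite /run_start; case: s => [|s] /= start; first by rewrite model0_eq.
by rewrite x_next start; exact: model_cut.
Qed.

Lemma gap_start_le s : run_start desc s ->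
  f (x s) - prox_value s <= dot (g (x s)) (g (x s)) / (2 * rho).
Proof.
move=> start; rewrite /prox_value.
have := start_model (z s.+1) start.
set w := z s.+1 - x s; set a0 := g (x s) => lin.
have := divr_ge0 (dot_ge0 (a0 + rho *: w)) (ltW (mulr_gt0 (ltr0n R 2) rho_gt0)).
have -> : dot (a0 + rho *: w) (a0 + rho *: w) / (2 * rho) =
          dot a0 a0 / (2 * rho) + dot a0 w + rho / 2 * dot w w.
  by rewrite dot_sqrD !dotZl !dotZr; field; rewrite gt_eqF.
lra.
Qed.

(* While x stays at x_s, the proximal value stays |g(x_s)|^2/(2(2L+rho))
   below f(x_s): compare with the gradient step of length 1/(2L+rho). *)
Lemma gap_ge s k : x k = x s ->
  dot (g (x s)) (g (x s)) / (2 * (2 * L + rho)) <= f (x s) - prox_value k.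
Proof.
move=> xk; rewrite /prox_value xk.
set a0 := g (x s); set t := 1 / (2 * L + rho); set y := x s - t *: a0.
have y_sub : y - x s = - (t *: a0) by rewrite /y addrAC subrr add0r.
have := prox_le k y; rewrite xk y_sub dotNN dotZl dotZr => prox.
have := smooth (x s) y; rewrite y_sub dotNN dotNr !dotZl !dotZr => upper.
have c_neq0 : 2 * L + rho != 0 by rewrite gt_eqF //; have := rho_gt0; have := L_ge0; lra.
have -> : dot a0 a0 / (2 * (2 * L + rho)) =
          t * dot a0 a0 - (L + rho / 2) * (t * (t * dot a0 a0)).
  by rewrite /t; field.
lra.
Qed.

Lemma null_pair s k : x k = x s -> ~~ desc k -> ~~ desc k.+1 ->
  rho * (1 - beta) * (dot (g (x s)) (g (x s)) / (2 * (2 * L + rho)))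
    <= 2 * L * (prox_value k.+1 - prox_value k).
Proof.
move=> xk null_k null_k1.
have incr := prox_value_null null_k.
have xk1 : x k.+1 = x s by rewrite x_null.
have lower := gap_ge xk1.
have := null_gap null_k1; rewrite xk1 => gap.
have pv_ge : model k.+1 (z k.+2) <= prox_value k.+1.
  by rewrite /prox_value lerDl mulr_ge0 ?dot_ge0 // divr_ge0 // ltW.
set c := dot (g (x s)) (g (x s)) / _ in lower *.
set dd := dot (z k.+2 - z k.+1) _ in incr gap *.
have gap_c : (1 - beta) * c <= L * dd.
  by apply/ltW/(le_lt_trans _ gap)/ler_wpM2l; [have := beta_lt1; lra | lra].
have pv_incr : rho / 2 * dd <= prox_value k.+1 - prox_value k by lra.
have := ler_wpM2l (ltW rho_gt0) gap_c; have := ler_wpM2l L_ge0 pv_incr.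
lra.
Qed.

Lemma run_x_const s n : (forall k, (s <= k < s + n)%N -> ~~ desc k) ->
  forall j, (j <= n)%N -> x (s + j)%N = x s.
Proof.
move=> nulls; elim => [|j IH] j_le; first by rewrite addn0.
rewrite addnS x_null; first exact/IH/ltnW.
by apply: nulls; rewrite leq_addr /= ltn_add2l.
Qed.

Lemma run_telescope s n : (forall k, (s <= k < s + n)%N -> ~~ desc k) ->
  forall m, (m < n)%N ->
  m%:R * (rho * (1 - beta) * (dot (g (x s)) (g (x s)) / (2 * (2 * L + rho))))
    <= 2 * L * (prox_value (s + m) - prox_value s).
Proof.
move=> nulls; elim => [|m IH] m_lt; first by rewrite mul0r addn0 subrr mulr0.
have in_run j : (j < n)%N -> ~~ desc (s + j)%N.
  by move=> j_lt; apply: nulls; rewrite leq_addr ltn_add2l.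
have null_next : ~~ desc (s + m).+1 by rewrite -addnS in_run.
have step := null_pair (run_x_const nulls (ltnW (ltnW m_lt))) (in_run _ (ltnW m_lt)) null_next.
by rewrite addnS -natr1; have := IH (ltnW m_lt); lra.
Qed.

(* A run of n null steps from a non-optimal serious point x_s: the proximal
   value gains at least (n-1) null_pair increments but stays within
   |g(x_s)|^2/(2 rho) of f(x_s), hence n <= null_run_const L rho beta. *)
Lemma null_run_length s n : run_start desc s ->
  (forall k, (s <= k < s + n)%N -> ~~ desc k) -> (0 < n)%N -> fstar f < f (x s) ->
  n%:R <= null_run_const L rho beta.
Proof.
move=> start nulls n_gt0 not_opt.
set G := dot (g (x s)) (g (x s)).
have G_gt0 : 0 < G.
  rewrite lt0r dot_ge0 andbT; apply/eqP => /dot_eq0 g0.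
  have [xs xs_min] := fstar_attained f_min.
  have := g_sub (x s) xs; rewrite g0 dot0l addr0 xs_min; lra.
have pred_lt : (n.-1 < n)%N by rewrite ltn_predL.
have tele := run_telescope nulls pred_lt.
have start_le := gap_start_le start.
have end_ge := gap_ge (run_x_const nulls (leq_pred n)).
rewrite -/G in tele start_le end_ge.
have c_ge0 : 0 <= G / (2 * (2 * L + rho)).
  by rewrite divr_ge0 ?dot_ge0 // mulr_ge0 // addr_ge0 ?mulr_ge0 // ltW.
have pv_le : 2 * L * (prox_value (s + n.-1) - prox_value s) <= L * G / rho.
  have -> : L * G / rho = 2 * L * (G / (2 * rho)) by field; rewrite gt_eqF.
  by rewrite ler_wpM2l ?mulr_ge0 //; lra.
rewrite -(prednK n_gt0) -natr1.
apply: (null_run_arith L_ge0 rho_gt0 _ G_gt0 (ler0n _ _) (le_trans tele pv_le)).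
by rewrite beta_ge0 beta_lt1.
Qed.

Lemma nulls_bound K : (forall k, (k < K)%N -> fstar f < f (x k)) ->
  (count (fun k => ~~ desc k) (iota 0 K))%:R <=
    null_run_const L rho beta * ((count desc (iota 0 K))%:R + 1).
Proof.
move=> not_opt; apply: null_steps_bound => s n sn_le start nulls.
case: (posnP n) => [->|n_gt0]; first exact: null_run_const_ge0.
by apply: (null_run_length start nulls n_gt0); apply: not_opt; lia.
Qed.

End NullSteps.
End ProximalBundle.

(* Main theorem. *)
Theorem theorem2 (R : realType) (d : nat) (f : 'rV[R]_d -> R)
  (grad : 'rV[R]_d -> 'rV[R]_d) (L : R) (g : 'rV[R]_d -> 'rV[R]_d)
  (beta rho : R) (x z : nat -> 'rV[R]_d) (model : nat -> 'rV[R]_d -> R) :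
  convex_fun f ->
  is_gradient f grad ->
  0 <= L ->
  (forall u v, enorm (grad u - grad v) <= L * enorm (u - v)) ->
  attains_min f ->
  (forall u, is_subgrad f u (g u)) ->
  0 < beta < 1 -> 0 < rho ->
  PBM_run f g beta rho x z model ->
  has_ubound (range (fun k => dist (x k) (Xstar f) ^+ 2)) ->
  let D2 := sup (range (fun k => dist (x k) (Xstar f) ^+ 2)) in
  0 < D2 ->
  forall eps : R, 0 < eps -> eps <= f (x 0%N) - fstar f ->
  let N := 2 * rho * D2 / (beta * eps)
           + ceil_pos (2 * ln ((f (x 0%N) - fstar f) / (rho * D2)) / beta) in
  forall K : nat, (forall k, (k < K)%N -> eps < f (x k) - fstar f) ->
    (count (is_descent f beta x z model) (iota 0 K))%:R <= N /\
    (count (fun k => ~~ is_descent f beta x z model k) (iota 0 K))%:R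
      <= 16 * (L + rho) ^+ 3 / ((1 - beta) ^+ 2 * rho ^+ 3) * (N + 1).
Proof.
move=> f_cvx f_grad L_ge0 grad_lip f_min g_sub /andP[beta_gt0 beta_lt1] rho_gt0 run
  D2_bounded D2 D2_gt0 eps eps_gt0 _ N K gap_gt.
have dist_le k : dist (x k) (Xstar f) ^+ 2 <= D2 by apply: ub_le_sup => //; exists k.
have descents : (count (is_descent f beta x z model) (iota 0 K))%:R <= N.
  rewrite /N -[2 * rho * D2]mulrA; apply: descents_bound dist_le eps_gt0 gap_gt => //.
  by rewrite beta_gt0 ltW.
have smooth := smooth_upper_bound f_grad L_ge0 grad_lip g_sub.
have not_opt k : (k < K)%N -> fstar f < f (x k) by move=> /gap_gt; lra.
split=> //; apply: le_trans (nulls_bound g_sub f_min rho_gt0 run L_ge0 (ltW beta_gt0)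
  beta_lt1 smooth not_opt) _.
by rewrite ler_wpM2l ?lerD2r // null_run_const_ge0.
Qed.
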